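(* Let $\Omega_H$ be the infinite hexagonal lattice graph (the infinite 3-regular honeycomb lattice, whose faces are hexagons). Then $\chi_{td}(\Omega_H) = 7$.
   Context: For a (possibly infinite) simple graph $G$ and a positive integer $k$, a proper $k$-total difference labeling of $G$ is a function $f: V(G)\to\{1,\dots,k\}$, extended to edges by $f(\{u,v\}) = |f(u)-f(v)|$, such that: (i) adjacent vertices receive different labels; (ii) two distinct edges sharing a vertex receive different labels; (iii) no edge receives the same label as either of its endpoints. $\chi_{td}(G)$ denotes the smallest $k$ for which $G$ has a proper $k$-total difference labeling. *)

From Stdlib Require Import ZArith Lia.
Open Scope Z_scope.

Record graph := Graph {
  gV : Type;
  gadj : gV -> gV -> Prop;
  gadj_sym : forall u v, gadj u v -> gadj v u;
  gadj_irrefl : forall v, ~ gadj v v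
}.

Definition edge_label {V : Type} (f : V -> Z) (u v : V) : Z := Z.abs (f u - f v).

Definition proper_td_labeling (G : graph) (k : Z) (f : gV G -> Z) : Prop :=
  (forall v, 1 <= f v <= k) /\
  (forall u v, gadj G u v -> f u <> f v) /\
  (forall u v w, gadj G u v -> gadj G u w -> v <> w ->
       edge_label f u v <> edge_label f u w) /\
  (forall u v, gadj G u v -> edge_label f u v <> f u /\ edge_label f u v <> f v).

Definition has_td_labeling (G : graph) (k : Z) : Prop :=
  exists f, proper_td_labeling G k f.

Definition chi_td_eq (G : graph) (k : Z) : Prop :=
  1 <= k /\ has_td_labeling G k /\
  forall k', 1 <= k' -> has_td_labeling G k' -> k <= k'.

(* The infinite hexagonal (honeycomb) lattice in its "brick wall" embedding:
   vertices Z x Z, horizontal edges (x,y)-(x+1,y) always, vertical edges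
   (x,y)-(x,y+1) exactly when x+y is even. Every vertex has degree 3 and
   all faces are hexagons. *)
Definition hex_adj (p q : Z * Z) : Prop :=
  let (x1, y1) := p in let (x2, y2) := q in
  (y1 = y2 /\ Z.abs (x1 - x2) = 1) \/
  (x1 = x2 /\ Z.abs (y1 - y2) = 1 /\ Z.even (x1 + Z.min y1 y2) = true).

Lemma hex_adj_sym : forall p q, hex_adj p q -> hex_adj q p.
Proof.
  intros [x1 y1] [x2 y2]; unfold hex_adj; intros [[H1 H2]|[H1 [H2 H3]]].
  - left; split; [congruence|]. rewrite <- H2; rewrite <- Z.abs_opp; f_equal; ring.
  - right; split; [congruence|]. split; [rewrite <- H2; rewrite <- Z.abs_opp; f_equal; ring|].
    subst x2; rewrite Z.min_comm; exact H3.
Qed.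

Lemma hex_adj_irrefl : forall p, ~ hex_adj p p.
Proof.
  intros [x y]; unfold hex_adj; intros [[_ H]|[_ [H _]]];
  rewrite Z.sub_diag in H; discriminate.
Qed.

Definition Omega_H : graph := Graph (Z * Z) hex_adj hex_adj_sym hex_adj_irrefl.

From Stdlib Require Import ZArith Lia List Bool.
Import ListNotations.
Open Scope Z_scope.

(* On a cubic graph, properness of a labeling is a condition on each vertex
   label together with the labels of its three neighbours.  With labels in
   {1,...,6}, repeatedly discarding every label that cannot be surrounded by
   three remaining labels removes 3, then 2, then 5, then 1, 4 and 6: no
   vertex can be labelled at all.  Conversely, on the brick-wall honeycomb the
   rows labelled periodically 1 3 2 7 and 5 7 6 4 (alternating with the row
   parity) form a proper 7-labeling. *)

Definition star_ok (c a b d : Z) : bool :=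
  let ea := Z.abs (c - a) in let eb := Z.abs (c - b) in let ed := Z.abs (c - d) in
  negb ((c =? a) || (c =? b) || (c =? d) ||
        (ea =? c) || (ea =? a) || (eb =? c) || (eb =? b) || (ed =? c) || (ed =? d) ||
        (ea =? eb) || (ea =? ed) || (eb =? ed)).

Lemma star_ok_iff c a b d :
  star_ok c a b d = true <->
  c <> a /\ c <> b /\ c <> d /\
  Z.abs (c - a) <> c /\ Z.abs (c - a) <> a /\
  Z.abs (c - b) <> c /\ Z.abs (c - b) <> b /\
  Z.abs (c - d) <> c /\ Z.abs (c - d) <> d /\
  Z.abs (c - a) <> Z.abs (c - b) /\ Z.abs (c - a) <> Z.abs (c - d) /\
  Z.abs (c - b) <> Z.abs (c - d).
Proof.
  unfold star_ok; cbv zeta.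
  rewrite negb_true_iff, !orb_false_iff, !Z.eqb_neq; tauto.
Qed.

Definition supported (S : list Z) (c : Z) : bool :=
  existsb (fun a => existsb (fun b => existsb (star_ok c a b) S) S) S.

Definition prune (S : list Z) : list Z := filter (supported S) S.

Lemma In_prune S c a b d :
  In c S -> In a S -> In b S -> In d S -> star_ok c a b d = true -> In c (prune S).
Proof.
  intros Hc Ha Hb Hd Hstar; apply filter_In; split; [exact Hc|].
  apply existsb_exists; exists a; split; [exact Ha|].
  apply existsb_exists; exists b; split; [exact Hb|].
  apply existsb_exists; exists d; auto.
Qed.

Lemma prune_1to6_empty : Nat.iter 4 prune [1; 2; 3; 4; 5; 6] = [].
Proof. reflexivity. Qed.

Section CubicGraph.

Variables (G : graph) (nb1 nb2 nb3 : gV G -> gV G).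
Hypothesis adj_iff : forall u v, gadj G u v <-> v = nb1 u \/ v = nb2 u \/ v = nb3 u.
Hypothesis nb_distinct : forall u, nb1 u <> nb2 u /\ nb1 u <> nb3 u /\ nb2 u <> nb3 u.

Definition star_at (f : gV G -> Z) (u : gV G) : bool :=
  star_ok (f u) (f (nb1 u)) (f (nb2 u)) (f (nb3 u)).

Lemma proper_td_labeling_iff_star k f :
  proper_td_labeling G k f <->
  (forall v, 1 <= f v <= k) /\ forall u, star_at f u = true.
Proof.
  unfold proper_td_labeling, star_at, edge_label; split.
  - intros [Hrange [Hvert [Hedge Hend]]]; split; [exact Hrange|]; intro u.
    assert (A1 : gadj G u (nb1 u)) by (apply adj_iff; auto).
    assert (A2 : gadj G u (nb2 u)) by (apply adj_iff; auto).
    assert (A3 : gadj G u (nb3 u)) by (apply adj_iff; auto).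
    destruct (nb_distinct u) as [D12 [D13 D23]].
    pose proof (Hvert _ _ A1); pose proof (Hvert _ _ A2); pose proof (Hvert _ _ A3).
    pose proof (Hend _ _ A1); pose proof (Hend _ _ A2); pose proof (Hend _ _ A3).
    pose proof (Hedge _ _ _ A1 A2 D12); pose proof (Hedge _ _ _ A1 A3 D13).
    pose proof (Hedge _ _ _ A2 A3 D23).
    apply star_ok_iff; tauto.
  - intros [Hrange Hstar]; split; [exact Hrange|].
    split; [|split].
    + intros u v Hv; apply adj_iff in Hv; specialize (Hstar u); apply star_ok_iff in Hstar.
      destruct Hv as [-> | [-> | ->]]; tauto.
    + intros u v w Hv Hw Hvw; apply adj_iff in Hv; apply adj_iff in Hw.
      specialize (Hstar u); apply star_ok_iff in Hstar.
      destruct Hv as [-> | [-> | ->]]; destruct Hw as [-> | [-> | ->]];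
        solve [contradiction Hvw; reflexivity | tauto | intro E; symmetry in E; tauto].
    + intros u v Hv; apply adj_iff in Hv; specialize (Hstar u); apply star_ok_iff in Hstar.
      destruct Hv as [-> | [-> | ->]]; tauto.
Qed.

Lemma labels_in_prune f S :
  (forall u, star_at f u = true) -> (forall u, In (f u) S) -> forall u, In (f u) (prune S).
Proof. intros Hstar HS u; exact (In_prune S _ _ _ _ (HS _) (HS _) (HS _) (HS _) (Hstar u)). Qed.

Lemma no_td_labeling_le_6 (v0 : gV G) k : k <= 6 -> ~ has_td_labeling G k.
Proof.
  intros Hk [f Hf]; apply proper_td_labeling_iff_star in Hf as [Hrange Hstar].
  assert (H1to6 : forall u, In (f u) [1; 2; 3; 4; 5; 6]).
  { intro u; specialize (Hrange u); simpl.
    assert (1 = f u \/ 2 = f u \/ 3 = f u \/ 4 = f u \/ 5 = f u \/ 6 = f u) by lia.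
    tauto. }
  assert (Hiter : forall n u, In (f u) (Nat.iter n prune [1; 2; 3; 4; 5; 6])).
  { induction n; [exact H1to6|]; exact (labels_in_prune f _ Hstar IHn). }
  specialize (Hiter 4%nat v0); rewrite prune_1to6_empty in Hiter; exact Hiter.
Qed.

End CubicGraph.

Definition hex_right '(x, y) : Z * Z := (x + 1, y).
Definition hex_left '(x, y) : Z * Z := (x - 1, y).
Definition hex_vert '(x, y) : Z * Z := (x, if Z.even (x + y) then y + 1 else y - 1).

Lemma hex_adj_iff p q :
  hex_adj p q <-> q = hex_right p \/ q = hex_left p \/ q = hex_vert p.
Proof.
  destruct p as [x y], q as [x2 y2]; unfold hex_adj; simpl.
  assert (Hpred : Z.even (x + (y - 1)) = negb (Z.even (x + y))).
  { replace (x + (y - 1)) with (Z.pred (x + y)) by lia.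
    rewrite Z.even_pred, <- Z.negb_even; reflexivity. }
  split.
  - intros [[-> Hx] | [-> [Hy Heven]]].
    + destruct (Z.abs_spec (x - x2)) as [[_ E] | [_ E]];
        [right; left | left]; f_equal; lia.
    + right; right; destruct (Z.abs_spec (y - y2)) as [[_ E] | [_ E]].
      * replace y2 with (y - 1) in * by lia; rewrite Z.min_r, Hpred in Heven by lia.
        apply negb_true_iff in Heven; rewrite Heven; reflexivity.
      * replace y2 with (y + 1) in * by lia; rewrite Z.min_l in Heven by lia.
        rewrite Heven; reflexivity.
  - intros [E | [E | E]]; injection E as -> ->.
    + left; split; [reflexivity | replace (x - (x + 1)) with (-1) by lia; reflexivity].
    + left; split; [reflexivity | replace (x - (x - 1)) with 1 by lia; reflexivity].
    + right; split; [reflexivity|]; destruct (Z.even (x + y)) eqn:Heven.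
      * rewrite Z.min_l by lia; split; [replace (y - (y + 1)) with (-1) by lia|]; auto.
      * rewrite Z.min_r, Hpred by lia.
        split; [replace (y - (y - 1)) with 1 by lia|]; auto.
Qed.

Lemma hex_nb_distinct p :
  hex_right p <> hex_left p /\ hex_right p <> hex_vert p /\ hex_left p <> hex_vert p.
Proof. destruct p as [x y]; simpl; repeat split; intro E; injection E; lia. Qed.

Definition brick_tile (i j : Z) : Z :=
  match j, i with
  | 0, 0 => 1 | 0, 1 => 3 | 0, 2 => 2 | 0, _ => 7
  | _, 0 => 5 | _, 1 => 7 | _, 2 => 6 | _, _ => 4
  end.

Definition hex_label7 '(x, y) : Z := brick_tile (x mod 4) (y mod 2).

Lemma brick_tile_range i j : 1 <= brick_tile i j <= 7.
Proof.
  unfold brick_tile.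
  repeat match goal with |- context [match ?t with _ => _ end] => destruct t end; lia.
Qed.

Lemma brick_tile_star i j : 0 <= i < 4 -> 0 <= j < 2 ->
  star_ok (brick_tile i j) (brick_tile ((i + 1) mod 4) j)
          (brick_tile ((i + 3) mod 4) j) (brick_tile i ((j + 1) mod 2)) = true.
Proof.
  intros Hi Hj.
  assert (i = 0 \/ i = 1 \/ i = 2 \/ i = 3) as [-> | [-> | [-> | ->]]] by lia;
  assert (j = 0 \/ j = 1) as [-> | ->] by lia; reflexivity.
Qed.

(* The vertical neighbour lies in the row of the other parity, whichever way it goes. *)
Lemma hex_label7_star p :
  star_at Omega_H hex_right hex_left hex_vert hex_label7 p = true.
Proof.
  destruct p as [x y]; unfold star_at; simpl.
  replace ((x + 1) mod 4) with ((x mod 4 + 1) mod 4)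
    by (Z.to_euclidean_division_equations; lia).
  replace ((x - 1) mod 4) with ((x mod 4 + 3) mod 4)
    by (Z.to_euclidean_division_equations; lia).
  replace ((if Z.even (x + y) then y + 1 else y - 1) mod 2) with ((y mod 2 + 1) mod 2)
    by (destruct (Z.even (x + y)); Z.to_euclidean_division_equations; lia).
  apply brick_tile_star; apply Z.mod_pos_bound; lia.
Qed.

Theorem mainTheorem3 : chi_td_eq Omega_H 7%Z.
Proof.
  pose proof (proper_td_labeling_iff_star Omega_H hex_right hex_left hex_vert
                hex_adj_iff hex_nb_distinct) as Hstar_iff.
  split; [lia | split].
  - exists hex_label7; apply Hstar_iff; split.
    + intros [x y]; apply brick_tile_range.
    + exact hex_label7_star.
  - intros k _ Hk; apply Z.nlt_ge; intro Hlt.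
    exact (no_td_labeling_le_6 Omega_H hex_right hex_left hex_vert
             hex_adj_iff hex_nb_distinct (0, 0) k ltac:(lia) Hk).
Qed.
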